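(* Let $(G_i)_{i\in I}$ be an at most countable family of Polish groups and $G=\prod_iG_i$. Then $G$ has ample generics if and only if each $G_i$ has ample generics. Likewise, if $(G_i,\tau_i,\partial_i)_{i\in I}$ is an at most countable family of Polish topometric groups and $G=\prod_iG_i$ is endowed with the product topology $\tau$ and the metric $\partial((g_i),(h_i))=\sup_{i\in I}\partial_i(g_i,h_i)$, then $(G,\tau,\partial)$ has ample generics if and only if $(G_i,\tau_i,\partial_i)$ has ample generics for every $i$.
   Context: A Polish group $K$ has ample generics if for every $n$ there is $\bar g\in K^n$ whose diagonal conjugacy class $\{(kg_0k^{-1},\dots,kg_{n-1}k^{-1})\colon k\in K\}$ is co-meagre in $K^n$. A Polish topometric group is a triple $(G,\tau,\partial)$ with $(G,\tau)$ a Polish group, $\partial$ a bi-invariant metric whose topology refines $\tau$ and which is $\tau$-lower semi-continuous. It has ample generics if for every $n$ and $\varepsilon>0$ there is $\bar g\in G^n$ whose diagonal conjugacy class $C$ satisfies that $(C)_\varepsilon=\{\bar h\colon\partial(\bar h,C)<\varepsilon\}$ is co-meagre in $G^n$, where $G^n$ has the product topology and supremum metric. *)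

From HB Require Import structures.
From mathcomp Require Import all_boot all_order all_algebra.
From mathcomp Require Import all_classical all_reals all_analysis.
From mathcomp Require Import Rstruct.
Set Implicit Arguments. Unset Strict Implicit. Unset Printing Implicit Defensive.
Import Order.TTheory GRing.Theory Num.Theory.
Local Open Scope classical_set_scope.
Local Open Scope ring_scope.

Definition R := Rdefinitions.R.

Definition nowhere_dense {T : topologicalType} (A : set T) :=
  interior (closure A) = set0.

Definition meager {T : topologicalType} (A : set T) :=
  exists F : nat -> set T, (forall n, nowhere_dense (F n)) /\ A `<=` \bigcup_n F n.

Definition comeager {T : topologicalType} (A : set T) := meager (~` A).

Definition separable_space (T : topologicalType) :=
  exists D : set T, countable D /\ dense D.

Definition is_metric {T : Type} (d : T -> T -> R) :=
  [/\ forall x y, 0 <= d x y,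
      forall x y, d x y = 0 <-> x = y,
      forall x y, d x y = d y x &
      forall x y z, d x z <= d x y + d y z].

Definition metric_compatible {T : topologicalType} (d : T -> T -> R) :=
  forall A : set T, open A <->
    (forall x, A x -> exists e : R, 0 < e /\ [set y | d x y < e] `<=` A).

Definition metric_complete {T : topologicalType} (d : T -> T -> R) :=
  forall u : nat -> T,
    (forall e : R, 0 < e -> exists N : nat, forall m n : nat,
        (N <= m)%N -> (N <= n)%N -> d (u m) (u n) < e) ->
    exists x : T, u @ \oo --> x.

Definition completely_metrizable (T : topologicalType) :=
  exists d : T -> T -> R, [/\ is_metric d, metric_compatible d & metric_complete d].

Definition polish_space (T : topologicalType) :=
  separable_space T /\ completely_metrizable T.

Record group_ops (T : Type) := GroupOps {
  gmul : T -> T -> T;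
  gone : T;
  ginv : T -> T }.

Definition group_axioms {T : Type} (G : group_ops T) :=
  [/\ forall x y z, gmul G x (gmul G y z) = gmul G (gmul G x y) z,
      forall x, gmul G (gone G) x = x,
      forall x, gmul G x (gone G) = x,
      forall x, gmul G (ginv G x) x = gone G &
      forall x, gmul G x (ginv G x) = gone G].

Definition topological_group {T : topologicalType} (G : group_ops T) :=
  group_axioms G /\
  continuous (fun p : T * T => gmul G p.1 p.2) /\ continuous (ginv G).

Definition polish_group {T : topologicalType} (G : group_ops T) :=
  topological_group G /\ polish_space T.

Definition conj_by {T : Type} (G : group_ops T) (k g : T) :=
  gmul G (gmul G k g) (ginv G k).

Definition prod_group_ops {I : Type} {T : I -> Type} (G : forall i, group_ops (T i)) :
  group_ops (prod_topology T) :=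
  GroupOps (fun x y i => gmul (G i) (x i) (y i)) (fun i => gone (G i))
           (fun x i => ginv (G i) (x i)).

Definition power_space (T : topologicalType) (n : nat) : topologicalType :=
  prod_topology (fun _ : 'I_n => T).

Definition diag_conj_class {T : topologicalType} (G : group_ops T) (n : nat)
  (g : power_space T n) : set (power_space T n) :=
  [set h | exists k : T, h = (fun i => conj_by G k (g i))].

Definition ample_generics {T : topologicalType} (G : group_ops T) :=
  forall n : nat, exists g : power_space T n, comeager (diag_conj_class G g).

Local Open Scope ereal_scope.

Definition is_emetric {T : Type} (d : T -> T -> \bar R) :=
  [/\ forall x y, 0 <= d x y,
      forall x y, d x y = 0 <-> x = y,
      forall x y, d x y = d y x &
      forall x y z, d x z <= d x y + d y z].

Definition bi_invariant {T : Type} (G : group_ops T) (d : T -> T -> \bar R) :=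
  forall k x y, d (gmul G k x) (gmul G k y) = d x y /\
                d (gmul G x k) (gmul G y k) = d x y.

Definition metric_refines {T : topologicalType} (d : T -> T -> \bar R) :=
  forall A : set T, open A ->
    forall x, A x -> exists e : R, (0 < e)%R /\ [set y | d x y < e%:E] `<=` A.

Definition lsc_metric {T : topologicalType} (d : T -> T -> \bar R) :=
  forall r : R, closed [set p : T * T | d p.1 p.2 <= r%:E].

Definition polish_topometric_group {T : topologicalType} (G : group_ops T)
  (d : T -> T -> \bar R) :=
  [/\ polish_group G, is_emetric d, bi_invariant G d, metric_refines d & lsc_metric d].

(* supremum metric on a product (0 is included so that the empty product
   gets the value 0; since all values are >= 0 this does not change the sup) *)
Definition sup_metric {I : Type} {T : I -> Type} (d : forall i, T i -> T i -> \bar R)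
  (x y : forall i, T i) : \bar R :=
  ereal_sup ([set 0] `|` range (fun i => d i (x i) (y i))).

Definition set_dist {U : Type} (dU : U -> U -> \bar R) (x : U) (C : set U) : \bar R :=
  ereal_inf [set dU x c | c in C].

Definition eps_nbhd {U : Type} (dU : U -> U -> \bar R) (C : set U) (eps : R) : set U :=
  [set h | set_dist dU h C < eps%:E].

Definition tm_ample_generics {T : topologicalType} (G : group_ops T)
  (d : T -> T -> \bar R) :=
  forall (n : nat) (eps : R), (0 < eps)%R ->
    exists g : power_space T n,
      @comeager (power_space T n) (eps_nbhd (sup_metric (fun _ : 'I_n => d)) (diag_conj_class G g) eps).

(* Let Z = (prod_i G_i)^n.  Diagonal conjugacy in Z is coordinatewise, and so
   is the supremum metric, so a tuple of Z lies in the class (or in an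
   epsilon-neighbourhood of the class) of g iff each of its columns, in G_i^n,
   lies in the class (neighbourhood) of the corresponding column of g, with
   the conjugators assembled coordinatewise.

   If such a set is comeager in Z, a Kuratowski-Ulam argument for the map
   (x, z) |-> "z with its i-th column replaced by x" shows that its image
   under the i-th column map is comeager in G_i^n; this needs Z to be Baire
   with a countable pi-base, which holds since a countable product of Polish
   spaces is Polish.  Conversely, the column maps pull dense open sets back to
   dense open sets, so the countably many comeager sets given by the G_i
   (taking epsilon/2 in the topometric case) pull back to a comeager subset
   of the class, resp. epsilon-neighbourhood, of the assembled tuple. *)

From HB Require Import structures.
From mathcomp Require Import all_boot all_order all_algebra.
From mathcomp Require Import all_classical all_reals all_analysis.
From mathcomp Require Import Rstruct lra.
Set Implicit Arguments. Unset Strict Implicit. Unset Printing Implicit Defensive.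
Import Order.TTheory GRing.Theory Num.Theory.
Local Open Scope classical_set_scope.
Local Open Scope ring_scope.

Section Category.
Context {T : topologicalType}.

Lemma nowhere_dense0 : nowhere_dense (@set0 T).
Proof. by rewrite /nowhere_dense closure0 interior0. Qed.

Lemma nowhere_denseS (A B : set T) : A `<=` B -> nowhere_dense B -> nowhere_dense A.
Proof.
rewrite /nowhere_dense => AB nB; apply/seteqP; split => // x Ax.
by rewrite -nB; exact: interiorS (closureS AB) _ Ax.
Qed.

Lemma nowhere_dense_setC (U : set T) : open U -> dense U -> nowhere_dense (~` U).
Proof.
move=> oU dU; rewrite /nowhere_dense -(closure_id _).1; last by rewrite closedC.
apply/seteqP; split => // x Ix.
have [y [/interior_subset nUy Uy]] := dU _ (ex_intro _ x Ix) (@open_interior _ _).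
exact: nUy.
Qed.

Lemma meager_bigcup (J : Type) (D : set J) (F : J -> set T) :
  countable D -> (forall j, D j -> nowhere_dense (F j)) ->
  meager (\bigcup_(j in D) F j).
Proof.
move=> /countable_injP[e ie] nF.
exists (fun m => \bigcup_(j in [set j | D j /\ e j = m]) F j); split; last first.
  by move=> x [j Dj Fjx]; exists (e j) => //; exists j.
move=> m; have [[j [Dj ejm]]|nj] := pselect (exists j, D j /\ e j = m).
  apply: nowhere_denseS (nF j Dj) => x [j' [Dj' ej'm] Fj'x].
  by have <- : j' = j by apply: ie; rewrite ?in_setE // ej'm.
by apply: nowhere_denseS nowhere_dense0 => x [j Dj _]; apply: nj; exists j.
Qed.

Lemma comeagerS (A B : set T) : A `<=` B -> comeager A -> comeager B.
Proof.
move=> AB [F [nF sF]]; exists F; split => // x nBx.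
by apply: sF => Ax; exact: nBx (AB x Ax).
Qed.

Lemma comeager_bigcap (J : Type) (D : set J) (U : J -> set T) :
  countable D -> (forall j, D j -> open (U j) /\ dense (U j)) ->
  comeager (\bigcap_(j in D) U j).
Proof.
move=> cD oU; rewrite /comeager setC_bigcap.
by apply: meager_bigcup cD _ => j /oU[]; exact: nowhere_dense_setC.
Qed.

Lemma comeager_open_dense (A : set T) : comeager A ->
  exists U : nat -> set T,
    (forall k, open (U k) /\ dense (U k)) /\ \bigcap_k U k `<=` A.
Proof.
move=> [F [nF sF]]; exists (fun k => ~` closure (F k)); split.
  move=> k; split; first exact/closed_openC/closed_closure.
  move=> O [x Ox] oO; have [//|nOF] := pselect (O `&` ~` closure (F k) !=set0).
  have OF : O `<=` interior (closure (F k)).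
    rewrite -((interior_id O).1 oO); apply: interiorS => y Oy.
    by apply: contra_notP nOF => nFy; exists y.
  by move: (OF x Ox); rewrite (nF k).
move=> x Ux; apply: contrapT => nAx; have [k _ Fkx] := sF x nAx.
exact: Ux k I (subset_closure Fkx).
Qed.

End Category.

Section Metric.
Context {T : topologicalType} (d : T -> T -> R).
Hypothesis dm : is_metric d.

Lemma metric_ge0 x y : 0 <= d x y. Proof. by case: dm. Qed.
Lemma metric_eq0 x y : d x y = 0 <-> x = y. Proof. by case: dm. Qed.
Lemma metric_xx x : d x x = 0. Proof. exact/metric_eq0. Qed.
Lemma metric_sym x y : d x y = d y x. Proof. by case: dm. Qed.
Lemma metric_triangle x y z : d x z <= d x y + d y z. Proof. by case: dm. Qed.

Hypothesis dc : metric_compatible d.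

Lemma open_ball x r : open [set y | d x y < r].
Proof.
apply/dc => y /= xy; exists (r - d x y); split; first by rewrite subr_gt0.
by move=> z /= yz; have := metric_triangle x y z; lra.
Qed.

Lemma nbhs_ball x r : 0 < r -> nbhs x [set y | d x y < r].
Proof.
by move=> r0; apply: open_nbhs_nbhs; split; [exact: open_ball|rewrite /= metric_xx].
Qed.

Lemma cvg_metric_le (u : nat -> T) x c r : u @ \oo --> x ->
  (\forall m \near \oo, d c (u m) < r) -> d c x <= r.
Proof.
move=> ux ucr; rewrite leNgt; apply/negP => rcx.
have cxr : 0 < d c x - r by rewrite subr_gt0.
have uxr : \forall m \near \oo, d x (u m) < d c x - r := ux _ (nbhs_ball x cxr).
have [m [/= cur xur]] := filter_ex (filterI ucr uxr).
by have := metric_triangle c (u m) x; rewrite (metric_sym (u m)); lra.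
Qed.

Hypothesis dk : metric_complete d.

(* The radius doubles on the left so that the closed [p.2]-ball about [p.1]
   still lies in the open [r]-ball about [c] and in [U]. *)
Lemma ball_in_open_dense (U : set T) c r k : open U -> dense U -> 0 < r ->
  exists p : T * R, [/\ 0 < p.2, p.2 < k.+1%:R^-1, p.2 <= r &
     [set y | d p.1 y < p.2 + p.2] `<=` [set y | d c y < r] `&` U].
Proof.
move=> oU dU r0.
have oI : open ([set y | d c y < r] `&` U) by apply: openI => //; exact: open_ball.
have [y [cy Uy]] : [set y | d c y < r] `&` U !=set0.
  by apply: dU; [exists c; rewrite /= metric_xx|exact: open_ball].
have [e [e0 eI]] := (dc _).1 oI y (conj cy Uy).
have k0 : 0 < k.+1%:R^-1 :> R by rewrite invr_gt0.
pose m := Num.min e (Num.min r k.+1%:R^-1).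
have me : m <= e by rewrite ge_min lexx.
have mr : m <= r by rewrite !ge_min lexx orbT.
have mk : m <= k.+1%:R^-1 by rewrite !ge_min lexx !orbT.
have m0 : 0 < m by rewrite !lt_min e0 r0 k0.
have m2 : m / 2 < m by lra.
exists (y, m / 2); split => /=; first by lra.
- exact: lt_le_trans m2 mk.
- exact: le_trans (ltW m2) mr.
by move=> z /= yz; apply: eI => /=; lra.
Qed.

Lemma complete_metric_baire (x0 : T) (U : nat -> set T) :
  (forall k, open (U k) /\ dense (U k)) -> exists x, forall k, U k x.
Proof.
move=> oU.
have /choice[f fP] : forall pk : (T * R) * nat, exists q : T * R, 0 < pk.1.2 ->
    [/\ 0 < q.2, q.2 < pk.2.+1%:R^-1, q.2 <= pk.1.2 &
     [set y | d q.1 y < q.2 + q.2] `<=` [set y | d pk.1.1 y < pk.1.2] `&` U pk.2].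
  move=> [p k] /=; have [p0|_] := ltP 0 p.2; last by exists p.
  by have [q qP] := ball_in_open_dense p.1 k (oU k).1 (oU k).2 p0; exists q.
pose fix s k : T * R := if k is k'.+1 then f (s k', k') else (x0, 1).
have s_gt0 k : 0 < (s k).2.
  by elim: k => [|k IH] /=; [exact: ltr01|case: (fP (s k, k) IH)].
have sP k := fP (s k, k) (s_gt0 k).
have s_nested k m : (k <= m)%N ->
    [set y | d (s m).1 y < (s m).2] `<=` [set y | d (s k).1 y < (s k).2].
  elim: m => [|m IH]; first by rewrite leqn0 => /eqP ->.
  rewrite leq_eqVlt => /orP[/eqP -> //|]; rewrite ltnS => /IH + y /= smy.
  apply; have [sm0 _ _ /(_ y)] := sP m; rewrite -[f _]/(s m.+1).
  by case => //=; lra.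
have s_near k m : (k <= m)%N -> d (s k).1 (s m).1 < (s k).2.
  by move=> km; apply: s_nested km _ _; rewrite /= metric_xx.
have s_small k : (s k.+1).2 < k.+1%:R^-1 by case: (sP k).
have s_cauchy e : 0 < e -> exists N : nat, forall m n : nat,
    (N <= m)%N -> (N <= n)%N -> d (s m).1 (s n).1 < e.
  move=> e0.
  have [N _ /(_ N (leqnn N)) Ne] := near_infty_natSinv_lt (PosNum (divr_gt0 e0 (ltr0n R 2))).
  exists N.+1 => m n Nm Nn; have := s_near _ _ Nm; have := s_near _ _ Nn.
  have := lt_trans (s_small N) Ne; have := metric_triangle (s m).1 (s N.+1).1 (s n).1.
  by rewrite [d (s m).1 (s N.+1).1]metric_sym /=; lra.
have [x sx] := dk s_cauchy.
exists x => k; have [_ _ _ skU] := sP k; rewrite -[f _]/(s k.+1) in skU.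
have skx : d (s k.+1).1 x <= (s k.+1).2.
  by apply: cvg_metric_le sx _; exists k.+1 => // m; exact: s_near.
by have [] := skU x; rewrite //=; have := s_gt0 k.+1; lra.
Qed.

End Metric.

Definition countable_pibase (T : topologicalType) :=
  exists B : set (set T), [/\ countable B, forall b, B b -> open b /\ b !=set0 &
    forall O, open O -> O !=set0 -> exists2 b, B b & b `<=` O].

Lemma polish_countable_pibase (T : topologicalType) :
  polish_space T -> countable_pibase T.
Proof.
move=> [[D [cD dD]] [d [dm dc _]]].
pose ball (p : T * nat) := [set y | d p.1 y < p.2.+1%:R^-1].
exists [set ball p | p in D `*` setT]; split.
- exact: sub_countable (card_image_le _ _) (countableX cD (countableP _)).
- move=> _ [[c k] _ <-]; split; first exact: open_ball.
  by exists c; rewrite /ball /= metric_xx // invr_gt0.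
move=> O oO [z Oz].
have [r [r0 zrO]] := (dc O).1 oO z Oz.
have [k _ /(_ k (leqnn k)) kr] := near_infty_natSinv_lt (PosNum (divr_gt0 r0 (ltr0n R 2))).
have zk : [set y | d z y < k.+1%:R^-1] z by rewrite /= metric_xx // invr_gt0.
have [c [zc Dc]] := dD _ (ex_intro _ z zk) (open_ball dm dc z _).
exists (ball (c, k)); first by exists (c, k).
move=> y /= cy; apply: zrO => /=; have := metric_triangle dm z c y.
by move: zc cy kr; rewrite /ball /=; move: k.+1%:R^-1 => a; lra.
Qed.

Lemma minr1_triangle {F : realFieldType} (a b c : F) : 0 <= b -> 0 <= c ->
  a <= b + c -> Num.min 1 a <= Num.min 1 b + Num.min 1 c.
Proof.
by rewrite /Num.min; case: (ltP 1 a); case: (ltP 1 b); case: (ltP 1 c); lra.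
Qed.

Lemma lt_minr1 {F : realFieldType} (a r : F) : Num.min 1 a < Num.min 1 r -> a < r.
Proof. by rewrite /Num.min; case: (ltP 1 a); case: (ltP 1 r); lra. Qed.

Lemma prod_cvg (I : Type) (K : I -> topologicalType) (F : set_system (prod_topology K))
  (x : prod_topology K) : Filter F -> (forall i, (fun f => f i) @ F --> x i) -> F --> x.
Proof.
move=> FF Fx.
pose coord_class i := Topological.class (initial_topology (fun f : forall i, K i => f i)).
have [_] := @cvg_sup _ _ coord_class F x FF.
apply => i A /= [B [[B' oB' <-] Bx] BA].
by apply: filterS BA _; apply: Fx; apply: open_nbhs_nbhs.
Qed.

Lemma prod_continuous (X : topologicalType) (I : Type) (K : I -> topologicalType)
  (f : X -> prod_topology K) : (forall i, continuous (fun x => f x i)) -> continuous f.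
Proof. by move=> fc x; apply: prod_cvg => i; exact: fc. Qed.

Lemma coord_continuous (I : Type) (K : I -> topologicalType) (i : I) :
  continuous (fun f : prod_topology K => f i).
Proof. exact: (@proj_continuous {classic I} K i). Qed.
Arguments coord_continuous {I K} i.

Section ProductMetric.
Local Unset Implicit Arguments.
Context {I : Type} {K : I -> topologicalType}.
Variables (dd : forall i, K i -> K i -> R) (e : I -> nat).
Hypotheses (dm : forall i, is_metric (dd i)) (dc : forall i, metric_compatible (dd i)).
Hypothesis e_inj : injective e.

Definition prod_weight i (x y : prod_topology K) : R :=
  Num.min 1 (dd i (x i) (y i)) / 2 ^+ e i.

Definition prod_dist (x y : prod_topology K) : R :=
  sup ([set 0] `|` range (fun i => prod_weight i x y)).

Lemma prod_weight_le_pow i x y : prod_weight i x y <= (2 ^+ e i)^-1.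
Proof. by rewrite ler_pdivrMr ?exprn_gt0 // mulVf ?expf_neq0 // ge_min lexx. Qed.

Lemma prod_weight_le_min i x y : prod_weight i x y <= Num.min 1 (dd i (x i) (y i)).
Proof.
rewrite ler_pdivrMr ?exprn_gt0 // ler_peMr ?le_min ?ler01 ?metric_ge0 //.
by rewrite -natrX ler1n expn_gt0.
Qed.

Lemma prod_weight_lt i x y r : prod_weight i x y < Num.min 1 r / 2 ^+ e i ->
  dd i (x i) (y i) < r.
Proof. by rewrite ltr_pM2r ?invr_gt0 ?exprn_gt0 //; exact: lt_minr1. Qed.

Let prod_weight_bounded x y : has_ubound ([set 0] `|` range (fun i => prod_weight i x y)).
Proof.
exists 1 => t [->|[i _ <-]]; first exact: ler01.
by apply: le_trans (prod_weight_le_min i x y) _; rewrite ge_min lexx.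
Qed.

Lemma prod_weight_le_dist i x y : prod_weight i x y <= prod_dist x y.
Proof. by apply: ub_le_sup; [exact: prod_weight_bounded|right; exists i]. Qed.

Lemma prod_dist_ge0 x y : 0 <= prod_dist x y.
Proof. by apply: ub_le_sup; [exact: prod_weight_bounded|left]. Qed.

Lemma prod_dist_le x y c : 0 <= c -> (forall i, prod_weight i x y <= c) ->
  prod_dist x y <= c.
Proof. by move=> c0 xyc; apply: ge_sup; [exists 0; left|move=> t [->|[i _ <-]]]. Qed.

(* Coordinates beyond the first [N] contribute at most [2 ^- N]. *)
Lemma prod_dist_le_box x y N r : (2 ^+ N)^-1 <= r ->
  (forall i, (e i < N)%N -> dd i (x i) (y i) <= r) -> prod_dist x y <= r.
Proof.
move=> Nr xyr; apply: prod_dist_le; first exact: le_trans Nr.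
move=> i; have [iN|Ni] := ltnP (e i) N.
  by apply: le_trans (prod_weight_le_min i x y) _; rewrite ge_min xyr ?orbT.
apply: le_trans (prod_weight_le_pow i x y) (le_trans _ Nr).
by rewrite lef_pV2 ?posrE ?exprn_gt0 // ler_eXn2l // ltr1n.
Qed.

Lemma prod_dist_metric : is_metric prod_dist.
Proof.
split.
- exact: prod_dist_ge0.
- move=> x y; split => [xy0|->]; last first.
    apply/eqP; rewrite eq_le prod_dist_ge0 andbT; apply: prod_dist_le => // i.
    by rewrite /prod_weight metric_xx // min_r ?ler01 // mul0r.
  apply: functional_extensionality_dep => i; apply/(metric_eq0 (dm i)).
  have := prod_weight_le_dist i x y; rewrite xy0 pmulr_lle0 ?invr_gt0 ?exprn_gt0 //.
  rewrite ge_min ler10 /= => xy_le0.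
  by apply/eqP; rewrite eq_le xy_le0 metric_ge0.
- move=> x y; rewrite /prod_dist (_ : (fun i => _) = fun i => prod_weight i y x) //.
  by apply: funext => i; rewrite /prod_weight metric_sym.
- move=> x y z; apply: prod_dist_le => [|i]; first by rewrite addr_ge0 ?prod_dist_ge0.
  apply: le_trans (lerD (prod_weight_le_dist i x y) (prod_weight_le_dist i y z)).
  rewrite /prod_weight -mulrDl ler_pM2r ?invr_gt0 ?exprn_gt0 //.
  by apply: minr1_triangle; rewrite ?metric_ge0 //; exact: metric_triangle.
Qed.

Lemma nbhs_prod_box (x : prod_topology K) N r : 0 < r ->
  nbhs x [set y : prod_topology K | forall i, (e i < N)%N -> dd i (x i) (y i) < r].
Proof.
move=> r0; elim: N => [|N IH]; first by apply: filterS filterT => y _ i.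
suff xN : nbhs x [set y : prod_topology K | forall i, e i = N -> dd i (x i) (y i) < r].
  apply: filterS (filterI IH xN) => y [yN yN'] i.
  by rewrite ltnS leq_eqVlt => /orP[/eqP|]; [exact: yN'|exact: yN].
have [[i0 i0N]|nN] := pselect (exists i, e i = N); last first.
  by apply: filterS filterT => y _ i iN; exfalso; apply: nN; exists i.
have xi0 := nbhs_ball (dm i0) (dc i0) (x i0) r0.
apply: (@filterS _ (nbhs x) _ _ _ _ (coord_continuous i0 x _ xi0)).
by move=> y /= yr i iN; have -> : i = i0 by apply: e_inj; rewrite iN.
Qed.

Lemma nbhs_prod_dist (x : prod_topology K) r : 0 < r -> nbhs x [set y | prod_dist x y < r].
Proof.
move=> r0; have r2 : 0 < r / 2 by lra.
have [N _ /(_ N (leqnn N))] := near_infty_natSinv_expn_lt (PosNum r2).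
rewrite div1r /= => Nr; near=> y.
suff : prod_dist x y <= r / 2 by rewrite /=; lra.
apply: prod_dist_le_box (ltW Nr) _ => i iN; apply/ltW; move: i iN.
by near: y; exact: nbhs_prod_box.
Unshelve. all: by end_near.
Qed.

Lemma prod_dist_compatible : metric_compatible prod_dist.
Proof.
move=> A; split => [oA x Ax|Aball]; last first.
  rewrite openE => x /Aball[r [r0 xrA]]; near=> y; apply: xrA.
  by near: y; exact: nbhs_prod_dist.
pose F := filter_from [set r : R | 0 < r] (fun r => [set y | prod_dist x y < r]).
have FF : Filter F.
  apply: filter_from_filter; first by exists 1; exact: ltr01.
  move=> r1 r2 /= r10 r20; exists (Num.min r1 r2); first by rewrite /= lt_min r10 r20.
  by move=> y /= xy; split; apply: lt_le_trans xy _; rewrite ge_min lexx ?orbT.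
have Fx : F --> x.
  apply: prod_cvg => i B; rewrite nbhsE => -[V [oV Vxi] VB].
  have [r [r0 xrV]] := (dc i V).1 oV (x i) Vxi.
  exists (Num.min 1 r / 2 ^+ e i); first by rewrite /= divr_gt0 ?lt_min ?ltr01 ?exprn_gt0.
  move=> y /= xy; apply/VB/xrV/(prod_weight_lt i x y).
  exact: le_lt_trans (prod_weight_le_dist i x y) xy.
have [r r0 xrA] : F A by apply: Fx; apply: open_nbhs_nbhs.
by exists r.
Unshelve. all: by end_near.
Qed.

Lemma prod_dist_complete : (forall i, metric_complete (dd i)) -> metric_complete prod_dist.
Proof.
move=> dk u u_cauchy.
have ux i : exists xi : K i, (fun m => u m i) @ \oo --> xi.
  apply: (dk i (fun m => u m i)) => r r0.
  have r' : 0 < Num.min 1 r / 2 ^+ e i by rewrite divr_gt0 ?lt_min ?ltr01 ?exprn_gt0.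
  have [N uN] := u_cauchy _ r'; exists N => m n Nm Nn.
  apply: prod_weight_lt.
  exact: le_lt_trans (prod_weight_le_dist i (u m) (u n)) (uN m n Nm Nn).
by exists (fun i => sval (cid (ux i))); apply: prod_cvg => i; exact: svalP (cid (ux i)).
Qed.

Lemma prod_separable (a : prod_topology K) :
  (forall i, separable_space (K i)) -> separable_space (prod_topology K).
Proof.
move=> sK; have /all_sig[D /all_and2[cD dD]] := fun i => cid (sK i).
have /all_sig[f f_inj] : forall i, {f : K i -> nat | {in D i &, injective f}}.
  by move=> i; apply: cid; apply/countable_injP.
pose enum i := 'pinv_(fun=> a i) (D i) (f i).
have enumK i c : D i c -> enum i (f i c) = c.
  by move=> Dc; rewrite /enum pinvKV // inE.
pose g (l : seq nat) : prod_topology K :=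
  fun i => if (e i < size l)%N then enum i (nth 0%N l (e i)) else a i.
exists (range g); split.
  exact: sub_countable (card_image_le g setT) (countableP _).
move=> O [z Oz] oO; have [r [r0 zrO]] := (prod_dist_compatible O).1 oO z Oz.
have r2 : 0 < r / 2 by lra.
have [N _ /(_ N (leqnn N))] := near_infty_natSinv_expn_lt (PosNum r2).
rewrite div1r /= => Nr.
have /all_sig[n zn] : forall i, {n : nat | dd i (z i) (enum i n) < r / 2}.
  move=> i; apply: cid.
  have zi : [set y | dd i (z i) y < r / 2] (z i) by rewrite /= metric_xx.
  have [c [zc Dc]] := dD i _ (ex_intro _ _ zi) (open_ball (dm i) (dc i) _ _).
  by exists (f i c); rewrite enumK.
pose l := mkseq (fun k => if pselect (exists i, e i = k) is left h
                          then n (projT1 (cid h)) else 0%N) N.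
exists (g l); split; last by exists l.
apply: zrO => /=; suff : prod_dist z (g l) <= r / 2 by lra.
apply: prod_dist_le_box (ltW Nr) _ => i iN; rewrite /g size_mkseq iN nth_mkseq //.
case: pselect => [h|]; last by case; exists i.
by case: (cid h) => j /= /e_inj ->; exact: ltW.
Qed.

End ProductMetric.

Lemma polish_prod (I : Type) (K : I -> topologicalType) (a : prod_topology K) :
  countable [set: I] -> (forall i, polish_space (K i)) -> polish_space (prod_topology K).
Proof.
move=> /countable_injP[e e_inj] pK.
have {}e_inj : injective e by move=> i j; apply: e_inj; rewrite inE.
have /all_sig[dd /all_and3[dm dc dk]] := fun i => cid (pK i).2.
split; first exact: (prod_separable dd e dm dc e_inj a (fun i => (pK i).1)).
exists (prod_dist dd e); split.
- exact: prod_dist_metric.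
- exact: prod_dist_compatible.
- exact: prod_dist_complete.
Qed.

(* A Kuratowski-Ulam type theorem for the sections [s x] of [s]. *)
Lemma comeager_section (X Z : topologicalType) (s : X -> Z -> Z) :
  countable_pibase Z ->
  (forall U : nat -> set Z, (forall k, open (U k) /\ dense (U k)) ->
     exists z, forall k, U k z) ->
  (forall z, continuous (s ^~ z)) -> (forall x, continuous (s x)) ->
  (forall (W : set X) (V : set Z), open W -> W !=set0 -> open V -> V !=set0 ->
     exists2 M, open M /\ M !=set0 & M `<=` [set s x y | x in W & y in V]) ->
  forall A, comeager A -> comeager [set x | exists y, A (s x y)].
Proof.
move=> [B [cB oB pB]] baireZ sc1 sc2 s_int A /comeager_open_dense[U [oU UA]].
pose O (p : nat * set Z) := [set x | exists2 y, p.2 y & U p.1 (s x y)].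
have O_open_dense p : ([set: nat] `*` B) p -> open (O p) /\ dense (O p).
  case: p => k b [_ /= /oB[ob b0]]; split.
    rewrite (_ : O _ = \bigcup_(y in b) (s ^~ y) @^-1` U k).
      by apply: bigcup_open => y _; exact: (continuousP _).1 (sc1 y) _ (oU k).1.
    by apply/seteqP; split => x [y by_ Uy]; exists y.
  move=> W W0 oW; have [M [oM M0] MWb] := s_int W b oW W0 ob b0.
  have [_ [/MWb[x Wx [y by_ <-]] Uxy]] := (oU k).2 M M0 oM.
  by exists x; split => //; exists y.
have cD : countable ([set: nat] `*` B) by exact: countableX (countableP _) cB.
apply: comeagerS (comeager_bigcap cD O_open_dense) => x Ox.
have V_open_dense k : open [set y | U k (s x y)] /\ dense [set y | U k (s x y)].
  split; first exact: (continuousP _).1 (sc2 x) _ (oU k).1.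
  move=> V V0 oV; have [b Bb bV] := pB V oV V0.
  by have [y by_ Uy] := Ox (k, b) (conj I Bb); exists y; split => //; exact: bV.
by have [y Uy] := baireZ _ V_open_dense; exists y; apply: UA => k _; exact: Uy.
Qed.

Lemma dfwith_continuous_l (I : Type) (K : I -> topologicalType) (i : I) (a : K i) :
  continuous (fun f : prod_topology K => @dfwith {classic I} K f i a : prod_topology K).
Proof.
apply: prod_continuous => j; have [<-|ij] := eqVneq (i : {classic I}) j.
  rewrite (_ : (fun _ => _) = fun=> a); first exact: cst_continuous.
  by apply: funext => g; rewrite dfwithin.
rewrite (_ : (fun _ => _) = fun g : prod_topology K => g j); first exact: coord_continuous.
by apply: funext => g; rewrite dfwithout.
Qed.

Section Column.
Variables (I : Type) (T : I -> topologicalType) (n : nat) (i : I).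
Local Notation Z := (power_space (prod_topology T) n).
Local Notation X := (power_space (T i) n).

Definition column (z : Z) : X := fun k => z k i.

Definition set_column (x : X) (z : Z) : Z := fun k => @dfwith {classic I} T (z k) i (x k).

Lemma set_columnK (x : X) (z : Z) : column (set_column x z) = x.
Proof. by apply: funext => k; rewrite /column /set_column dfwithin. Qed.

Lemma column_set_column (z : Z) : set_column (column z) z = z.
Proof.
apply: funext => k; apply: functional_extensionality_dep => j.
by rewrite /set_column /column; case: (@dfwithP {classic I} T (z k) i (z k i) j).
Qed.

Lemma set_column_set_column (x x' : X) (z : Z) :
  set_column x (set_column x' z) = set_column x z.
Proof.
apply: funext => k; apply: functional_extensionality_dep => j.
rewrite /set_column; have [<-|ij] := eqVneq (i : {classic I}) j.
  by rewrite !dfwithin.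
by rewrite !dfwithout.
Qed.

Lemma column_continuous : continuous column.
Proof.
apply: prod_continuous => k z.
exact: cvg_comp _ _ (coord_continuous (K := fun=> prod_topology T) k z)
  (coord_continuous i _).
Qed.

Lemma set_column_continuous_l (z : Z) : continuous (set_column ^~ z).
Proof.
apply: (@prod_continuous X 'I_n (fun=> prod_topology T)) => k x.
exact: cvg_comp _ _ (coord_continuous (K := fun=> T i) k x)
  (@dfwith_continuous {classic I} T (z k) i _).
Qed.

Lemma set_column_continuous_r (x : X) : continuous (set_column x).
Proof.
apply: (@prod_continuous Z 'I_n (fun=> prod_topology T)) => k z.
exact: cvg_comp _ _ (coord_continuous (K := fun=> prod_topology T) k z)
  (@dfwith_continuous_l _ _ i (x k) (z k)).
Qed.

Lemma set_column_image_interior (W : set X) (V : set Z) :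
  open W -> W !=set0 -> open V -> V !=set0 ->
  exists2 M, open M /\ M !=set0 & M `<=` [set set_column x z | x in W & z in V].
Proof.
move=> oW [w Ww] oV [v Vv].
exists (column @^-1` W `&` set_column (column v) @^-1` V).
  split.
    apply: openI; first exact: (continuousP _).1 column_continuous _ oW.
    exact: (continuousP _).1 (set_column_continuous_r (x := column v)) _ oV.
  by exists (set_column w v); rewrite /= set_columnK set_column_set_column column_set_column.
move=> z [Wz Vz]; exists (column z) => //; exists (set_column (column v) z) => //.
by rewrite set_column_set_column column_set_column.
Qed.

Lemma dense_preimage_column (U : set X) : dense U -> dense (column @^-1` U).
Proof.
move=> dU O [z Oz] oO.
have oO' : open (set_column ^~ z @^-1` O).
  exact: (continuousP _).1 (set_column_continuous_l (z := z)) _ oO.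
have Oz' : (set_column ^~ z @^-1` O) (column z) by rewrite /= column_set_column.
have [x [Ox Ux]] := dU _ (ex_intro _ _ Oz') oO'.
by exists (set_column x z); split => //=; rewrite set_columnK.
Qed.

End Column.

Arguments column {I T n} i z.
Arguments set_column {I T n} i x z.

Lemma comeager_set_column (I : Type) (T : I -> topologicalType) (n : nat) (i : I)
    (a : prod_topology T) (A : set (power_space (prod_topology T) n)) :
  countable [set: I] -> (forall j, polish_space (T j)) -> comeager A ->
  comeager [set x | exists z, A (set_column i x z)].
Proof.
move=> cI pT; have pZ : polish_space (power_space (prod_topology T) n).
  exact: polish_prod (fun=> a) (countableP _) (fun=> polish_prod a cI pT).
apply: comeager_section; first exact: polish_countable_pibase.
- by have [_ [d [dm dc dk]]] := pZ; exact: complete_metric_baire dm dc dk (fun=> a).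
- by move=> z; exact: set_column_continuous_l.
- by move=> x; exact: set_column_continuous_r.
- exact: set_column_image_interior.
Qed.

Lemma comeager_columns (I : Type) (T : I -> topologicalType) (n : nat)
    (A : forall i, set (power_space (T i) n)) :
  countable [set: I] -> (forall i, comeager (A i)) ->
  comeager [set z : power_space (prod_topology T) n | forall i, A i (column i z)].
Proof.
move=> cI cA; have /all_sig[U /all_and2[oU UA]] := fun i => cid (comeager_open_dense (cA i)).
have cD : countable ([set: I] `*` [set: nat]) by exact: countableX cI (countableP _).
pose O (p : I * nat) := column p.1 @^-1` U p.1 p.2.
apply: (comeagerS _ (comeager_bigcap (U := O) cD _)) => [z Oz i|[i k] _].
  by apply: UA => k _; exact: (Oz (i, k)).
split; first exact: (continuousP _).1 (column_continuous (i := i)) _ (oU i k).1.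
exact: dense_preimage_column (oU i k).2.
Qed.

Section ProductConjugacy.
Variables (I : Type) (T : I -> topologicalType) (G : forall i, group_ops (T i)) (n : nat).
Local Notation Z := (power_space (prod_topology T) n).

Lemma diag_conj_class_column i (g z : Z) :
  diag_conj_class (prod_group_ops G) g z ->
  diag_conj_class (G i) (column i g) (column i z).
Proof. by move=> [c ->]; exists (c i). Qed.

Lemma diag_conj_class_columns (g z : Z) :
  (forall i, diag_conj_class (G i) (column i g) (column i z)) ->
  diag_conj_class (prod_group_ops G) g z.
Proof.
move=> gz; have /all_sig[c zc] := fun i => cid (gz i).
exists c; apply: funext => k; apply: functional_extensionality_dep => i.
exact: (congr1 (fun f => f k) (zc i)).
Qed.

End ProductConjugacy.

Theorem ample_generics_prod (I : Type) (T : I -> topologicalType)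
    (G : forall i, group_ops (T i)) :
  countable [set: I] -> (forall i, polish_group (G i)) ->
  (ample_generics (T := prod_topology T) (prod_group_ops G) <->
   forall i, ample_generics (G i)).
Proof.
move=> cI pG; have pT i : polish_space (T i) by case: (pG i).
split => [ampleG i n|ampleGi n].
  have [g Cg] := ampleG n; exists (column i g).
  apply: comeagerS (comeager_set_column i (fun j => gone (G j)) cI pT Cg).
  by move=> x [z /(diag_conj_class_column i)]; rewrite set_columnK.
have /all_sig[g Cg] := fun i => cid (ampleGi i n).
exists (fun k i => g i k).
apply: comeagerS (comeager_columns cI Cg) => z.
exact: diag_conj_class_columns.
Qed.

Section SupMetric.
Local Open Scope ereal_scope.

Lemma sup_metric_ge (I : Type) (T : I -> Type) (d : forall i, T i -> T i -> \bar R)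
  (x y : forall i, T i) i : d i (x i) (y i) <= sup_metric d x y.
Proof. by apply: ereal_sup_ubound; right; exists i. Qed.

Lemma sup_metric_ge0 (I : Type) (T : I -> Type) (d : forall i, T i -> T i -> \bar R)
  (x y : forall i, T i) : 0 <= sup_metric d x y.
Proof. by apply: ereal_sup_ubound; left. Qed.

Lemma sup_metric_le (I : Type) (T : I -> Type) (d : forall i, T i -> T i -> \bar R)
  (x y : forall i, T i) (M : \bar R) :
  0 <= M -> (forall i, d i (x i) (y i) <= M) -> sup_metric d x y <= M.
Proof. by move=> M0 xyM; apply: ge_ereal_sup => _ [->|[i _ <-]]. Qed.

Lemma set_dist_ltP (U : Type) (dU : U -> U -> \bar R) x C (eps : R) :
  set_dist dU x C < eps%:E <-> exists2 c, C c & dU x c < eps%:E.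
Proof.
split => [/ereal_inf_lt[_ [c Cc <-] xc]|[c Cc xc]]; first by exists c.
by apply: le_lt_trans xc; apply: ereal_inf_lbound; exists c.
Qed.

Variables (I : Type) (T : I -> topologicalType) (G : forall i, group_ops (T i))
  (d : forall i, T i -> T i -> \bar R) (n : nat).
Arguments d : clear implicits.
Local Notation Z := (power_space (prod_topology T) n).
Local Notation dZ := (sup_metric (fun _ : 'I_n => sup_metric d)).
Local Notation dX i := (sup_metric (fun _ : 'I_n => d i)).

Lemma sup_metric_column i (z z' : Z) : dX i (column i z) (column i z') <= dZ z z'.
Proof.
apply: sup_metric_le => [|k]; first exact: sup_metric_ge0.
exact: le_trans (sup_metric_ge d (z k) (z' k) i) (sup_metric_ge _ z z' k).
Qed.

Lemma sup_metric_columns_le (z z' : Z) (M : \bar R) : 0 <= M ->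
  (forall i, dX i (column i z) (column i z') <= M) -> dZ z z' <= M.
Proof.
move=> M0 zM; apply: sup_metric_le => // k; apply: sup_metric_le => // i.
exact: le_trans (sup_metric_ge _ (column i z) (column i z') k) (zM i).
Qed.

Lemma eps_nbhd_column i (g z : Z) eps :
  eps_nbhd dZ (diag_conj_class (prod_group_ops G) g) eps z ->
  eps_nbhd (dX i) (diag_conj_class (G i) (column i g)) eps (column i z).
Proof.
move=> /set_dist_ltP[c gc zc]; apply/set_dist_ltP; exists (column i c).
  exact: diag_conj_class_column.
exact: le_lt_trans (sup_metric_column i z c) zc.
Qed.

Lemma eps_nbhd_columns (g z : Z) (r eps : R) : (0 <= r)%R -> (r < eps)%R ->
  (forall i, eps_nbhd (dX i) (diag_conj_class (G i) (column i g)) r (column i z)) ->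
  eps_nbhd dZ (diag_conj_class (prod_group_ops G) g) eps z.
Proof.
move=> r0 reps zr.
have /all_sig2[c gc zc] := fun i => cid2 ((set_dist_ltP _ _ _ _).1 (zr i)).
apply/set_dist_ltP; exists (fun k i => c i k); first exact: diag_conj_class_columns.
have r0' : 0 <= r%:E by rewrite lee_fin.
apply: le_lt_trans (sup_metric_columns_le r0' (fun i => ltW (zc i))) _.
by rewrite lte_fin.
Qed.

End SupMetric.

Theorem tm_ample_generics_prod (I : Type) (T : I -> topologicalType)
    (G : forall i, group_ops (T i)) (d : forall i, T i -> T i -> \bar R) :
  countable [set: I] -> (forall i, polish_topometric_group (G i) (d i)) ->
  (tm_ample_generics (T := prod_topology T) (prod_group_ops G) (sup_metric d) <->
   forall i, tm_ample_generics (G i) (d i)).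
Proof.
move=> cI pG; have pT i : polish_space (T i) by case: (pG i) => -[].
split => [ampleG i n eps eps0|ampleGi n eps eps0].
  have [g Cg] := ampleG n eps eps0; exists (column i g).
  apply: comeagerS (comeager_set_column i (fun j => gone (G j)) cI pT Cg).
  by move=> x [z /(eps_nbhd_column i)]; rewrite set_columnK.
have eps2 : 0 < eps / 2 by rewrite divr_gt0.
have /all_sig[g Cg] := fun i => cid (ampleGi i n _ eps2).
exists (fun k i => g i k).
apply: comeagerS (comeager_columns cI Cg) => z.
by apply: eps_nbhd_columns; [exact: ltW|lra].
Qed.

Theorem proposition6p4 :
  (forall (I : Type) (T : I -> topologicalType) (G : forall i, group_ops (T i)),
      countable [set: I] ->
      (forall i, polish_group (G i)) ->
      (ample_generics (T := prod_topology T) (prod_group_ops G) <->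
       forall i, ample_generics (G i)))
  /\
  (forall (I : Type) (T : I -> topologicalType) (G : forall i, group_ops (T i))
          (d : forall i, T i -> T i -> \bar R),
      countable [set: I] ->
      (forall i, polish_topometric_group (G i) (d i)) ->
      (tm_ample_generics (T := prod_topology T) (prod_group_ops G) (sup_metric d) <->
       forall i, tm_ample_generics (G i) (d i))).
Proof. by split; [exact: ample_generics_prod|exact: tm_ample_generics_prod]. Qed.
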